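(* Let $d\ge1$ and let $f(t)=1+\sum_{i=1}^{d}\binom{x_i}{i}t^{i}$ be a polynomial of degree $d$ with positive real coefficients, where $x_i\ge i-1$ are real numbers, and suppose $x_d\ge d$. If all roots of $f(t)$ are real, then $x_1\ge x_2\ge\cdots\ge x_d$.
   Context: For real $x$ and integer $k\ge0$, $\binom{x}{k}=\frac{x(x-1)\cdots(x-k+1)}{k!}$; for each $k\ge1$ and real $y>0$ there is a unique real $x\ge k-1$ with $\binom{x}{k}=y$. *)

From mathcomp Require Import all_boot all_order all_algebra.
Set Implicit Arguments. Unset Strict Implicit. Unset Printing Implicit Defensive.
Import Order.TTheory GRing.Theory Num.Theory.
Local Open Scope ring_scope.

Definition binomR {R : realFieldType} (x : R) (k : nat) : R :=
  (\prod_(j < k) (x - j%:R)) / (k`!)%:R.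

Definition fpoly {R : realFieldType} (d : nat) (x : nat -> R) : {poly R} :=
  1 + \sum_(1 <= i < d.+1) binomR (x i) i *: 'X^i.

Definition real_rooted {R : realFieldType} (p : {poly R}) : Prop :=
  exists rs : seq R, p = lead_coef p *: \prod_(r <- rs) ('X - r%:P).

(* All roots of f are real and, its coefficients being positive, negative; hence its
   coefficients a_k satisfy Newton's inequalities (by induction on the roots), i.e.
   b_k = a_k / binom(d, k) is log-concave.  If x_(i+1) >= d but a_i < binom(x_(i+1), i),
   put lam = (x_(i+1) - i) / (d - i): then b_(i+1) > lam b_i, log-concavity propagates
   b_(k+1) >= lam b_k down to k = 0, so b_i >= lam^i, whereas
   binom(x_(i+1), i) / binom(d, i) <= lam^i, a contradiction.  So x_(i+1) >= d forces
   binom(x_i, i) >= binom(x_(i+1), i), i.e. x_i >= x_(i+1) >= d, and a downward induction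
   from x_d >= d concludes. *)

From mathcomp Require Import all_boot all_order all_algebra.
From mathcomp Require Import reals.
From mathcomp Require Import ring lra.
Import Order.TTheory GRing.Theory Num.Theory.
Local Open Scope ring_scope.

(* Newton's inequality at k for q * (X + c), where A, B, C, D are the coefficients
   q_(k-2), ..., q_(k+1) and u = deg q - k + 1, from those at k - 1 and k for q. *)
Lemma newton_ineq_step {R : realFieldType} {k u A B C D c : R} :
  1 <= k -> 1 <= u -> 0 <= A -> 0 < B -> 0 < C -> 0 <= D -> 0 <= c ->
  k * (u + 1) * A * C <= (k - 1) * u * B ^+ 2 ->
  (k + 1) * u * B * D <= k * (u - 1) * C ^+ 2 ->
  (k + 1) * (u + 1) * (A + c * B) * (C + c * D) <= k * u * (B + c * C) ^+ 2.
Proof.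
move=> k1 u1 A0 B0 C0 D0 c0 hAC hBD.
set X0 := k * u * B ^+ 2 - (k + 1) * (u + 1) * A * C.
set X2 := k * u * C ^+ 2 - (k + 1) * (u + 1) * B * D.
have hX0 : u * B ^+ 2 <= k * X0.
  have k10 : 0 <= k + 1 by lra.
  have := ler_wpM2l k10 hAC; rewrite /X0; nra.
have hX2 : k * C ^+ 2 <= u * X2.
  have u10 : 0 <= u + 1 by lra.
  have := ler_wpM2l u10 hBD; rewrite /X2; nra.
have hAD : (k + 1) * (u + 1) * A * D <= (k - 1) * (u - 1) * B * C.
  have kuBC0 : 0 < k * u * B * C by rewrite !mulr_gt0 //; lra.
  rewrite -(ler_pM2l kuBC0).
  have hAC0 : 0 <= k * (u + 1) * A * C by rewrite !mulr_ge0 //; lra.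
  have hBD0 : 0 <= (k + 1) * u * B * D by rewrite !mulr_ge0 //; lra.
  have := ler_pM hAC0 hBD0 hAC hBD.
  by congr (_ <= _); ring.
(* The difference of the two sides is a quadratic form in c, nonnegative by hX0 and hX2,
   plus c times the slack in hAD. *)
have hquad : 0 <= X0 - 2 * c * B * C + c ^+ 2 * X2.
  have ku0 : 0 < k * u by nra.
  rewrite -(pmulr_rge0 _ ku0).
  have := sqr_ge0 (u * B - k * c * C).
  have : k * c ^+ 2 * (k * C ^+ 2) <= k * c ^+ 2 * (u * X2).
    by apply: ler_wpM2l => //; nra.
  have : u * (u * B ^+ 2) <= u * (k * X0) by apply: ler_wpM2l => //; lra.
  nra.
have -> : k * u * (B + c * C) ^+ 2 =
    (k + 1) * (u + 1) * (A + c * B) * (C + c * D)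
    + (X0 - 2 * c * B * C + c ^+ 2 * X2)
    + c * ((k - 1) * (u - 1) * B * C - (k + 1) * (u + 1) * A * D).
  by rewrite /X0 /X2; ring.
by rewrite -addrA lerDl; apply: addr_ge0 => //; apply: mulr_ge0 => //; lra.
Qed.

Lemma coefXsubCM (R : nzRingType) (r : R) (q : {poly R}) j :
  (('X - r%:P) * q)`_j = (if j == 0%N then 0 else q`_j.-1) - r * q`_j.
Proof. by rewrite mulrBl coefB coefXM coefCM. Qed.

(* (a_k / C(n, k))^2 >= a_(k-1) / C(n, k-1) * a_(k+1) / C(n, k+1), denominators cleared. *)
Definition newton_ineqs {R : realFieldType} (n : nat) (a : nat -> R) : Prop :=
  forall k, (0 < k < n)%N ->
  k.+1%:R * (n%:R - k%:R + 1) * a k.-1 * a k.+1 <= k%:R * (n%:R - k%:R) * a k ^+ 2.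

Section NegativeRoots.
Context {R : realFieldType}.
Implicit Types (r : R) (s : seq R).
Local Notation prodXsubC s := (\prod_(r <- s) ('X - r%:P)).

Lemma coef_prod_XsubC_gt0 {s} : all (< 0) s ->
  forall j, (j <= size s)%N -> 0 < (prodXsubC s)`_j.
Proof.
elim: s => [_ [|//] _|r s IH /andP[r_lt0 /IH q_gt0] j]; first by rewrite big_nil coef1.
rewrite big_cons coefXsubCM /= => le_j_s.
set q := \prod_(_ <- _) _.
have q_ge0 i : 0 <= q`_i.
  case: (leqP i (size s)) => [/q_gt0/ltW // | lt_s_i].
  by rewrite nth_default ?size_prod_XsubC.
case: j le_j_s => [_|j /q_gt0 qj_gt0]; first by rewrite sub0r -mulNr mulr_gt0 ?q_gt0 ?oppr_gt0.
by rewrite subr_gt0 (le_lt_trans _ qj_gt0) // mulr_le0_ge0 ?q_ge0 ?ltW.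
Qed.

Lemma newton_prod_XsubC {s} : all (< 0) s -> newton_ineqs (size s) (nth 0 (prodXsubC s)).
Proof.
elim: s => [_ [] //|r s IH /andP[r_lt0 s_lt0]].
rewrite big_cons; set q := \prod_(_ <- _) _.
have q_gt0 := coef_prod_XsubC_gt0 s_lt0.
have q_top i : (size s < i)%N -> q`_i = 0 by move=> ?; rewrite nth_default ?size_prod_XsubC.
have q_ge0 i : 0 <= q`_i.
  by case: (leqP i (size s)) => [/q_gt0/ltW // | /q_top ->].
move=> [//|k] /andP[_ lt_k_s]; rewrite ltnS in lt_k_s; rewrite !coefXsubCM /=.
have qk_gt0 : 0 < q`_k by apply/q_gt0/ltnW.
have qk1_gt0 : 0 < q`_k.+1 by apply/q_gt0.
set A := if k == 0%N then 0 else q`_k.-1.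
have A_ge0 : 0 <= A by rewrite /A; case: ifP.
have newton_k : k.+1%:R * ((size s)%:R - k%:R + 1) * A * q`_k.+1
    <= (k.+1%:R - 1) * ((size s)%:R - k%:R) * q`_k ^+ 2.
  rewrite /A; case: (posnP k) => [-> | k_gt0]; first by rewrite mulr0 !mul0r subrr !mul0r.
  have := IH s_lt0 k; rewrite k_gt0 lt_k_s => /(_ isT).
  by congr (_ <= _); ring.
have newton_k1 : (k.+1%:R + 1) * ((size s)%:R - k%:R) * q`_k * q`_k.+2
    <= k.+1%:R * ((size s)%:R - k%:R - 1) * q`_k.+1 ^+ 2.
  case: (ltngtP k.+1 (size s)) lt_k_s => // [lt_k1_s _ | eq_k1_s _].
    have := IH s_lt0 k.+1; rewrite lt_k1_s => /(_ isT).
    by congr (_ <= _); ring.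
  have -> : (size s)%:R - k%:R - 1 = 0 :> R by rewrite -eq_k1_s; ring.
  by rewrite (q_top k.+2) -?eq_k1_s // !(mulr0, mul0r).
have k_ge1 : 1 <= k.+1%:R :> R by rewrite ler1n.
have u_ge1 : 1 <= (size s)%:R - k%:R :> R by rewrite lerBrDr addrC natr1 ler_nat.
have c_ge0 : 0 <= - r by rewrite oppr_ge0 ltW.
have := newton_ineq_step k_ge1 u_ge1 A_ge0 qk_gt0 qk1_gt0 (q_ge0 _) c_ge0 newton_k newton_k1.
by congr (_ <= _); ring.
Qed.

End NegativeRoots.

Section BinomR.
Context {R : realFieldType}.
Implicit Types (y u v : R) (k : nat).

Lemma binomR0 y : binomR y 0 = 1.
Proof. by rewrite /binomR big_ord0 fact0 divr1. Qed.

Lemma binomRS y k : binomR y k.+1 = binomR y k * (y - k%:R) / k.+1%:R.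
Proof.
rewrite /binomR big_ord_recr /= factS natrM.
have kS_neq0 : k.+1%:R != 0 :> R by rewrite pnatr_eq0.
have fact_neq0 : k`!%:R != 0 :> R by rewrite pnatr_eq0 -lt0n fact_gt0.
by field; rewrite addrC natr1 kS_neq0 fact_neq0.
Qed.

Lemma binomR_gt0 y k : k%:R - 1 < y -> 0 < binomR y k.
Proof.
rewrite /binomR => lt_k_y; rewrite divr_gt0 ?ltr0n ?fact_gt0 // prodr_gt0 // => j _.
by rewrite subr_gt0 (le_lt_trans _ lt_k_y) // lerBrDr natr1 ler_nat.
Qed.

Lemma ltr_binomR u v k : (0 < k)%N -> k%:R - 1 <= u -> u < v -> binomR u k < binomR v k.
Proof.
move=> k_gt0 le_k_u lt_uv; rewrite /binomR ltr_pM2r ?invr_gt0 ?ltr0n ?fact_gt0 //.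
rewrite -!(big_mkord xpredT (fun j => _ - j%:R)) ltr_prod_nat // => j /andP[_ lt_jk].
have : j%:R + 1 <= k%:R :> R by rewrite natr1 ler_nat.
by rewrite subr_ge0 ltrD2r; lra.
Qed.

Lemma binomR_ratioS y n k : (k < n)%N ->
  binomR y k.+1 / binomR n%:R k.+1 = binomR y k / binomR n%:R k * ((y - k%:R) / (n%:R - k%:R)).
Proof.
move=> lt_k_n; have lt_kn : k%:R < n%:R :> R by rewrite ltr_nat.
have Bk_gt0 : 0 < binomR (n%:R : R) k.
  by apply: binomR_gt0; rewrite ltrBlDr (lt_trans lt_kn) ?ltrDl.
rewrite !binomRS; field.
by rewrite subr_eq0 (gt_eqF lt_kn) (gt_eqF Bk_gt0) addrC natr1 pnatr_eq0.
Qed.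

Lemma binomR_ratio_le y n i k : (k <= i)%N -> (i < n)%N -> n%:R <= y ->
  binomR y k / binomR n%:R k <= ((y - i%:R) / (n%:R - i%:R)) ^+ k.
Proof.
move=> + lt_i_n le_n_y; have lt_in : i%:R < n%:R :> R by rewrite ltr_nat.
elim: k => [_|k IH lt_k_i]; first by rewrite !binomR0 divr1 expr0.
have lt_k_n := ltn_trans lt_k_i lt_i_n.
have lt_ki : k%:R < i%:R :> R by rewrite ltr_nat.
have lt_ky : k%:R < y by rewrite (lt_trans lt_ki) // (lt_le_trans lt_in).
have ratio_le : (y - k%:R) / (n%:R - k%:R) <= (y - i%:R) / (n%:R - i%:R).
  have : 0 <= (y - n%:R) * (i%:R - k%:R) by rewrite mulr_ge0 // subr_ge0 // ltW.
  rewrite ler_pdivrMr ?subr_gt0 ?(lt_trans lt_ki) // mulrAC ler_pdivlMr ?subr_gt0 //.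
  lra.
have lt_kn : k%:R < n%:R :> R by rewrite (lt_trans lt_ki).
rewrite binomR_ratioS // exprSr; apply: ler_pM => //; last exact/IH/ltnW.
  apply: divr_ge0; apply/ltW/binomR_gt0; rewrite ltrBlDr.
    by rewrite (lt_trans lt_ky) // ltrDl.
  by rewrite (lt_trans lt_kn) // ltrDl.
by apply: divr_ge0; rewrite subr_ge0 ltW.
Qed.

End BinomR.

Lemma logconcave_geometric_le {R : realDomainType} {b : nat -> R} {lam : R} {n i : nat} :
  (forall k, (k <= n)%N -> 0 < b k) ->
  (forall k, (0 < k < n)%N -> b k.-1 * b k.+1 <= b k ^+ 2) ->
  0 <= lam -> (i < n)%N -> lam * b i <= b i.+1 -> lam ^+ i * b 0%N <= b i.
Proof.
move=> b_gt0 b_lc lam_ge0 lt_i_n lam_i.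
have ratio t : (t <= i)%N -> lam * b (i - t)%N <= b (i - t).+1.
  elim: t => [_|t IH lt_t_i]; first by rewrite subn0.
  have eq_it : (i - t)%N = (i - t.+1).+1 by rewrite subnS prednK // subn_gt0.
  have lt_it_n : (i - t < n)%N by rewrite (leq_ltn_trans (leq_subr _ _)).
  move: (i - t.+1)%N eq_it IH lt_it_n => j -> /(_ (ltnW lt_t_i)) lam_j1 lt_j1_n.
  have := b_lc j.+1; rewrite lt_j1_n => /(_ isT) /= lc_j1.
  have bj_gt0 := b_gt0 j (ltnW (ltnW lt_j1_n)).
  have bj1_gt0 := b_gt0 j.+1 (ltnW lt_j1_n).
  rewrite -(ler_pM2r bj1_gt0); nra.
have {}ratio j : (j <= i)%N -> lam * b j <= b j.+1.
  by move=> le_j_i; have := ratio (i - j)%N (leq_subr _ _); rewrite subKn.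
elim: i lt_i_n {lam_i} ratio => [|i IH] lt_i_n ratio; first by rewrite expr0 mul1r.
rewrite exprS -mulrA (le_trans _ (ratio i (leqnSn i))) // ler_wpM2l //.
by rewrite IH ?(ltnW lt_i_n) // => j le_j_i; rewrite ratio ?(leq_trans le_j_i).
Qed.

Lemma newton_logconcave {R : realFieldType} {a : nat -> R} {n : nat} :
  newton_ineqs n a -> forall k, (0 < k < n)%N ->
  a k.-1 / binomR n%:R k.-1 * (a k.+1 / binomR n%:R k.+1) <= (a k / binomR n%:R k) ^+ 2.
Proof.
move=> newton [//|j] lt_j_n; have := newton j.+1 lt_j_n; move/andP: lt_j_n => [_ lt_j1_n].
rewrite /= !binomRS; set B := binomR n%:R j => ineq.
have lt_nj : (j.+1)%:R < n%:R :> R by rewrite ltr_nat.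
have B_gt0 : 0 < B by apply: binomR_gt0; rewrite ltrBlDr ltr_wpDr // ltr_nat ltnW.
have nj1_gt0 : 0 < n%:R - j.+1%:R :> R by rewrite subr_gt0.
have nj_gt0 : 0 < n%:R - j%:R :> R by rewrite subr_gt0 (lt_trans _ lt_nj) // ltr_nat.
rewrite -subr_ge0.
have -> : (a j.+1 / (B * (n%:R - j%:R) / j.+1%:R)) ^+ 2
    - a j / B * (a j.+2 / (B * (n%:R - j%:R) / j.+1%:R * (n%:R - j.+1%:R) / j.+2%:R))
  = (j.+1%:R * (n%:R - j.+1%:R) * a j.+1 ^+ 2 - j.+2%:R * (n%:R - j.+1%:R + 1) * a j * a j.+2)
    * j.+1%:R / (B ^+ 2 * (n%:R - j%:R) ^+ 2 * (n%:R - j.+1%:R)).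
  by field; rewrite !lt0r_neq0 //; have := ler0n R j; lra.
apply: divr_ge0; first by rewrite mulr_ge0 ?ler0n ?subr_ge0.
by apply: mulr_ge0; [rewrite mulr_ge0 ?sqr_ge0 | exact: ltW].
Qed.

Lemma horner_gt0_coef_ge0 {R : numDomainType} {p : {poly R}} {t : R} :
  (forall j, 0 <= p`_j) -> 0 < p`_0 -> 0 <= t -> 0 < p.[t].
Proof.
move=> p_ge0 p0_gt0 t_ge0.
have p_neq0 : p != 0 by apply/eqP => p0; move: p0_gt0; rewrite p0 coef0 ltxx.
rewrite horner_coef (polySpred p_neq0) big_ord_recl /= expr0 mulr1 ltr_pwDl //.
by rewrite sumr_ge0 // => i _; rewrite mulr_ge0 ?exprn_ge0.
Qed.

Lemma real_rooted_newton {R : realFieldType} {p : {poly R}} :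
  real_rooted p -> (forall j, 0 <= p`_j) -> 0 < p`_0 -> newton_ineqs (size p).-1 (nth 0 p).
Proof.
move=> [rs p_eq] p_ge0 p0_gt0.
have p_neq0 : p != 0 by apply/eqP => p0; move: p0_gt0; rewrite p0 coef0 ltxx.
set c := lead_coef p in p_eq.
have c_neq0 : c != 0 by rewrite lead_coef_eq0.
have rs_lt0 : all (< 0) rs.
  apply/allP => r r_rs /=; rewrite ltNge; apply/negP => r_ge0.
  have := horner_gt0_coef_ge0 p_ge0 p0_gt0 r_ge0.
  by rewrite p_eq hornerZ (rootP _) ?root_prod_XsubC // mulr0 ltxx.
have size_p : (size p).-1 = size rs by rewrite p_eq size_scale // size_prod_XsubC.
rewrite size_p => k k_range; rewrite p_eq !coefZ.
have := ler_wpM2l (sqr_ge0 c) (newton_prod_XsubC rs_lt0 _ k_range).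
by congr (_ <= _); ring.
Qed.

Lemma newton_binomR_le {R : realFieldType} {a : nat -> R} {d i : nat} {y : R} :
  newton_ineqs d a -> (forall k, (k <= d)%N -> 0 < a k) -> a 0%N = 1 ->
  (i < d)%N -> d%:R <= y -> a i.+1 = binomR y i.+1 -> binomR y i <= a i.
Proof.
move=> newton a_gt0 a0 lt_i_d le_d_y a_i1.
have B_gt0 k : (k <= d)%N -> 0 < binomR (d%:R : R) k.
  by move=> le_k_d; apply: binomR_gt0; rewrite ltrBlDr ltr_pwDr // ler_nat.
set b := fun k => a k / binomR d%:R k.
have b_gt0 k : (k <= d)%N -> 0 < b k by move=> le_k_d; rewrite divr_gt0 ?a_gt0 ?B_gt0.
set lam := (y - i%:R) / (d%:R - i%:R).
have lam_ge0 : 0 <= lam.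
  by rewrite ltW // divr_gt0 // subr_gt0 ?ltr_nat // (lt_le_trans _ le_d_y) // ltr_nat.
rewrite leNgt; apply/negP => lt_ai.
have lt_bc : b i < binomR y i / binomR d%:R i by rewrite /b ltr_pM2r // invr_gt0 B_gt0 // ltnW.
have lam_b : lam * b i <= b i.+1.
  rewrite /b a_i1 binomR_ratioS // -/lam [_ * lam]mulrC.
  by rewrite ler_wpM2l // ltW.
have := logconcave_geometric_le b_gt0 (newton_logconcave newton) lam_ge0 lt_i_d lam_b.
rewrite /b a0 binomR0 divr1 mulr1 => geo_le.
have := binomR_ratio_le y d i i (leqnn i) lt_i_d le_d_y.
by rewrite -/lam leNgt (le_lt_trans geo_le lt_bc).
Qed.

Section FPoly.
Context {R : realFieldType} {d : nat} {x : nat -> R}.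

Lemma coef_fpoly k :
  (fpoly d x)`_k = if k == 0%N then 1 else if (k <= d)%N then binomR (x k) k else 0.
Proof.
rewrite /fpoly coefD coef1 coef_sumMXn big_nat1_cond_eq andbT ltnS.
by case: k => [|k]; rewrite /= ?addr0 ?add0r.
Qed.

Lemma size_fpoly : binomR (x d) d != 0 -> size (fpoly d x) = d.+1.
Proof.
move=> xd_neq0; apply/eqP; rewrite eqn_leq; apply/andP; split.
  apply/leq_sizeP => j lt_d_j.
  by rewrite coef_fpoly gtn_eqF ?(leq_trans _ lt_d_j) // leqNgt lt_d_j.
rewrite ltnNge; apply: contra xd_neq0 => /leq_sizeP/(_ d (leqnn d)).
rewrite coef_fpoly leqnn; case: eqP => [_ /eqP | _ ->//].
by rewrite oner_eq0.
Qed.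

Hypothesis binomR_x_gt0 : forall i, (1 <= i <= d)%N -> 0 < binomR (x i) i.

Lemma coef_fpoly_gt0 k : (k <= d)%N -> 0 < (fpoly d x)`_k.
Proof. by rewrite coef_fpoly; case: k => [|k] //= lt_k_d; rewrite lt_k_d binomR_x_gt0. Qed.

Lemma coef_fpoly_ge0 k : 0 <= (fpoly d x)`_k.
Proof.
case: (leqP k d) => [/coef_fpoly_gt0/ltW // | lt_d_k].
by rewrite coef_fpoly gtn_eqF ?(leq_ltn_trans _ lt_d_k) // leqNgt lt_d_k.
Qed.

Hypothesis fpoly_real_rooted : real_rooted (fpoly d x).

Lemma newton_fpoly : (0 < d)%N -> newton_ineqs d (nth 0 (fpoly d x)).
Proof.
move=> d_gt0.
have := real_rooted_newton fpoly_real_rooted coef_fpoly_ge0 (coef_fpoly_gt0 0 (leq0n d)).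
by rewrite size_fpoly // lt0r_neq0 // binomR_x_gt0 // d_gt0 /=.
Qed.

Hypothesis x_ge : forall i, (1 <= i <= d)%N -> i%:R - 1 <= x i.

Lemma fpoly_antitone_step i : (0 < i < d)%N -> d%:R <= x i.+1 -> x i.+1 <= x i.
Proof.
move=> /andP[i_gt0 lt_i_d] le_d_xi1.
have newton := newton_fpoly (ltn_trans i_gt0 lt_i_d).
have := newton_binomR_le newton coef_fpoly_gt0 _ lt_i_d le_d_xi1.
rewrite !coef_fpoly /= gtn_eqF // lt_i_d ltnW // => /(_ erefl erefl) le_binom.
rewrite leNgt; apply: contraL le_binom => lt_x; rewrite -ltNge.
by apply: ltr_binomR => //; rewrite x_ge // i_gt0 ltnW.
Qed.

End FPoly.

Theorem mainTheorem3 (R : realType) (d : nat) (x : nat -> R)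
  (hd : (1 <= d)%N)
  (hx : forall i : nat, (1 <= i <= d)%N -> (i%:R - 1) <= x i)
  (hpos : forall i : nat, (1 <= i <= d)%N -> 0 < binomR (x i) i)
  (hxd : d%:R <= x d)
  (hreal : real_rooted (fpoly d x)) :
  forall i : nat, (1 <= i < d)%N -> x i.+1 <= x i.
Proof.
have step := fpoly_antitone_step hpos hreal hx.
have x_ge_d t : (t < d)%N -> d%:R <= x (d - t)%N.
  elim: t => [|t IH] lt_t_d; first by rewrite subn0.
  have eq_dt : (d - t.+1).+1 = (d - t)%N by rewrite subnS prednK // subn_gt0 ltnW.
  have le_d_x := IH (ltnW lt_t_d); rewrite -eq_dt in le_d_x *.
  by apply: le_trans le_d_x (step _ _ le_d_x); rewrite subn_gt0 lt_t_d ltn_subrL.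
move=> i /andP[i_gt0 lt_i_d]; apply: step; first by rewrite i_gt0.
by have := x_ge_d (d - i.+1)%N; rewrite subKn // ltn_subrL hd; apply.
Qed.
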